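(* Let $G=(V,E)$ be a simple undirected graph with $V=[n]$, let $N=\binom n2$, and enumerate $\mathcal P_n=\{(i,j):1\le i<j\le n\}$ as $(i_k,j_k)$, $k\in[N]$. Let $U=[u_1,\dots,u_n]\in\mathrm{Lab}(G)$, $K=U^\top U$, and let $\tilde U\in\mathbb R^{d^2\times N}$ be the Kronecker product embedding of the node pairs, with $k$-th column $\tilde u_k=u_{i_k}\otimes u_{j_k}$. Let $C>0$ and $\mathcal H_{\tilde U}=\{w\mid w=\tilde U\beta,\ \beta\in\mathbb R^N,\ \|\beta\|_\infty\le C\}$. Then for any $p\in(0,1/2]$, $$R(\mathcal H_{\tilde U},\tilde U,p)\le C\lambda_1(K)\sqrt{2p},$$ where $\lambda_1(K)$ is the largest eigenvalue of $K$.
   Context: $\mathrm{Lab}(G)$ (orthonormal representations) is the set of matrices $U=[u_1,\dots,u_n]\in\mathbb R^{d\times n}$ (any $d$) with $\|u_i\|_2=1$ for all $i$ and $u_i^\top u_j=0$ whenever $i\ne j$ and $(i,j)\notin E$. $\otimes$ denotes the Kronecker product. Transductive Rademacher complexity: $R(\mathcal H,\tilde U,p)=\frac1N\mathbb E_\gamma\big[\sup_{h\in\mathcal H}\sum_{k=1}^N\gamma_k h^\top\tilde u_k\big]$, with $\gamma_k$ i.i.d. taking values $+1,-1,0$ with probabilities $p,p,1-2p$. *)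

From HB Require Import structures.
From mathcomp Require Import all_boot all_order all_algebra.
From mathcomp Require Import boolp classical_sets reals.
Set Implicit Arguments. Unset Strict Implicit. Unset Printing Implicit Defensive.
Import Order.TTheory GRing.Theory Num.Theory.
Local Open Scope ring_scope.
Local Open Scope classical_set_scope.

Definition pairs (n : nat) := {p : 'I_n * 'I_n | (p.1 < p.2)%N}.

Definition simple_graph (n : nat) (e : rel 'I_n) :=
  symmetric e /\ irreflexive e.

Definition Lab (R : realType) (n d : nat) (e : rel 'I_n) (U : 'M[R]_(d, n)) :=
  (forall i, ((col i U)^T *m col i U) 0 0 = 1) /\
  (forall i j, i != j -> ~~ e i j -> ((col i U)^T *m col j U) 0 0 = 0).

(* Kronecker product of column vectors: (u (x) v)_{a*d'+b} = u_a v_b. *)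
Definition kron (R : realType) (d d' : nat) (u : 'cV[R]_d) (v : 'cV[R]_d')
  : 'cV[R]_(d * d') := (mxvec (u *m v^T))^T.

Definition Ut (R : realType) (n d : nat) (U : 'M[R]_(d, n)) (k : pairs n)
  : 'cV[R]_(d * d) := kron (col (val k).1 U) (col (val k).2 U).

Definition H_Ut (R : realType) (n d : nat) (U : 'M[R]_(d, n)) (C : R)
  : set 'cV[R]_(d * d) :=
  [set w | exists beta : pairs n -> R,
      (forall k, `|beta k| <= C) /\ w = \sum_k beta k *: Ut U k].

(* Rademacher-type variables: values +1, -1, 0 with probs p, p, 1-2p. *)
Definition gval (R : realType) (t : 'I_3) : R :=
  if val t == 0%N then 1 else if val t == 1%N then -1 else 0.
Definition gprob (R : realType) (p : R) (t : 'I_3) : R :=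
  if (val t < 2)%N then p else 1 - 2 * p.

(* Transductive Rademacher complexity R(H, Ut, p), for a family of columns
   ut indexed by a finite type I (N = #|I|); expectation over the i.i.d.
   gamma_k written as the finite sum over all outcomes. *)
Definition trans_rademacher (R : realType) (I : finType) (m : nat)
  (H : set 'cV[R]_m) (ut : I -> 'cV[R]_m) (p : R) : R :=
  (#|I|%:R)^-1 *
  \sum_(g : {ffun I -> 'I_3})
     (\prod_k gprob p (g k)) *
     sup [set (\sum_k gval R (g k) * (h^T *m ut k) 0 0) | h in H].

Definition lambda1 (R : realType) (n : nat) (K : 'M[R]_n) : R :=
  sup [set a : R | eigenvalue K a].

(* Write h = sum_l beta_l ut_l. The correlation sum_k gamma_k h^T ut_k equals
   sum_l beta_l X_l with X_l = sum_k gamma_k G_lk, G the Gram matrix of the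
   ut_k, so the supremum over |beta_l| <= C is at most C sum_l |X_l|. The
   gamma_k are centred and uncorrelated with variance 2p, hence
   E|X_l| <= sqrt (E X_l^2) = sqrt (2p sum_k G_lk^2). For Kronecker columns
   G_lk = K_{i_l i_k} K_{j_l j_k}, so sum_k G_lk^2 is at most the product of the
   squared norms of rows i_l and j_l of K. Row a of K is u_a^T U with u_a a unit
   vector, and max_{|y| = 1} |y^T U|^2 = lambda_1(K): the maximum exists by
   compactness of the sphere, and a maximizer is an eigenvector of U U^T whose
   image under U^T is an eigenvector of K dominating all its eigenvalues. *)

From HB Require Import structures.
From mathcomp Require Import all_boot all_order all_algebra.
From mathcomp Require Import boolp classical_sets reals.
From mathcomp Require Import topology normedtype derive.
From mathcomp Require Import ring lra.
Import Order.TTheory GRing.Theory Num.Theory.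
Import numFieldNormedType.Exports.
Set Implicit Arguments. Unset Strict Implicit. Unset Printing Implicit Defensive.
Local Open Scope ring_scope.

Section RowInnerProduct.
Variable R : realType.

Definition dotv m (x y : 'rV[R]_m) : R := (x *m y^T) 0 0.
Definition sqnorm m (x : 'rV[R]_m) : R := dotv x x.

Lemma dotvE m (x y : 'rV[R]_m) : dotv x y = \sum_i x 0 i * y 0 i.
Proof. by rewrite /dotv mxE; apply: eq_bigr => i _; rewrite mxE. Qed.

Lemma sqnormE m (x : 'rV[R]_m) : sqnorm x = \sum_i x 0 i ^+ 2.
Proof. by rewrite /sqnorm dotvE; apply: eq_bigr => i _; rewrite expr2. Qed.

Lemma sqnorm_ge0 m (x : 'rV[R]_m) : 0 <= sqnorm x.
Proof. by rewrite sqnormE sumr_ge0 // => i _; rewrite sqr_ge0. Qed.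

Lemma sqr_coord_le_sqnorm m (x : 'rV[R]_m) i : x 0 i ^+ 2 <= sqnorm x.
Proof. by rewrite sqnormE (bigD1 i) //= lerDl sumr_ge0 // => j _; rewrite sqr_ge0. Qed.

Lemma sqnorm0 m : sqnorm (0 : 'rV[R]_m) = 0.
Proof. by rewrite /sqnorm /dotv mul0mx mxE. Qed.

Lemma sqnorm_eq0 m (x : 'rV[R]_m) : (sqnorm x == 0) = (x == 0).
Proof.
apply/idP/eqP => [|->]; last by rewrite sqnorm0.
rewrite sqnormE psumr_eq0 => [/allP x0|i _]; last exact: sqr_ge0.
by apply/rowP => i; have := x0 i (mem_index_enum _); rewrite sqrf_eq0 mxE => /eqP.
Qed.

Lemma sqnorm_gt0 m (x : 'rV[R]_m) : (0 < sqnorm x) = (x != 0).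
Proof. by rewrite lt_def sqnorm_eq0 sqnorm_ge0 andbT. Qed.

Lemma dotvC m (x y : 'rV[R]_m) : dotv x y = dotv y x.
Proof. by rewrite !dotvE; apply: eq_bigr => i _; rewrite mulrC. Qed.

Lemma dotvDl m (x y z : 'rV[R]_m) : dotv (x + y) z = dotv x z + dotv y z.
Proof. by rewrite /dotv mulmxDl mxE. Qed.

Lemma dotvBl m (x y z : 'rV[R]_m) : dotv (x - y) z = dotv x z - dotv y z.
Proof. by rewrite /dotv mulmxBl !mxE. Qed.

Lemma dotvZl m a (x y : 'rV[R]_m) : dotv (a *: x) y = a * dotv x y.
Proof. by rewrite /dotv -scalemxAl mxE. Qed.

Lemma dotvDr m (x y z : 'rV[R]_m) : dotv x (y + z) = dotv x y + dotv x z.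
Proof. by rewrite dotvC dotvDl !(dotvC x). Qed.

Lemma dotvZr m a (x y : 'rV[R]_m) : dotv x (a *: y) = a * dotv x y.
Proof. by rewrite dotvC dotvZl dotvC. Qed.

Lemma sqnormZ m a (x : 'rV[R]_m) : sqnorm (a *: x) = a ^+ 2 * sqnorm x.
Proof. by rewrite /sqnorm dotvZl dotvZr mulrA expr2. Qed.

Lemma sqnorm_normalize m (x : 'rV[R]_m) :
  x != 0 -> sqnorm ((Num.sqrt (sqnorm x))^-1 *: x) = 1.
Proof.
rewrite -sqnorm_gt0 => x_gt0.
by rewrite sqnormZ exprVn sqr_sqrtr ?sqnorm_ge0 // mulVf ?gt_eqF.
Qed.

Lemma sqnormDZ m (x y : 'rV[R]_m) t :
  sqnorm (x + t *: y) = sqnorm x + 2 * t * dotv x y + t ^+ 2 * sqnorm y.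
Proof. by rewrite /sqnorm dotvDl !dotvDr !dotvZl !dotvZr (dotvC y x); ring. Qed.

Lemma dotv_mulmx m k (x y : 'rV[R]_m) (A : 'M[R]_(m, k)) :
  dotv (x *m A) (y *m A) = dotv (x *m (A *m A^T)) y.
Proof. by rewrite /dotv trmx_mul !mulmxA. Qed.

Lemma continuous_sqnorm_mulmx m k (A : 'M[R]_(m, k)) :
  continuous (fun y : 'rV[R]_m => sqnorm (y *m A)).
Proof.
have -> : (fun y : 'rV[R]_m => sqnorm (y *m A)) =
          (fun y => \sum_j (y *m A) 0 j * (y *m A) 0 j).
  by apply: funext => y; rewrite sqnormE; apply: eq_bigr => j _; rewrite expr2.
have entry_cont j : continuous (fun y : 'rV[R]_m => (y *m A) 0 j).
  have -> : (fun y : 'rV[R]_m => (y *m A) 0 j) = (fun y => \sum_i y 0 i * A i j).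
    by apply: funext => y; rewrite mxE.
  apply: continuous_big => [|i _]; first exact: add_continuous.
  by move=> y; apply: continuousM; [exact: coord_continuous | exact: cst_continuous].
apply: continuous_big => [|j _]; first exact: add_continuous.
by move=> y; apply: continuousM; exact: entry_cont.
Qed.

End RowInnerProduct.

Lemma linear_quadratic_le0 (R : realFieldType) (S B : R) :
  (forall t, t * S + t ^+ 2 * B <= 0) -> S = 0.
Proof.
move=> le0; have B1 : 0 < `|B| + 1 by rewrite ltr_wpDl.
have := le0 (S / (`|B| + 1)); rewrite -(@ler_pM2r _ ((`|B| + 1) ^+ 2)) ?exprn_gt0 //.
have -> : (S / (`|B| + 1) * S + (S / (`|B| + 1)) ^+ 2 * B) * (`|B| + 1) ^+ 2 =
          S ^+ 2 * (`|B| + 1 + B).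
  by field; rewrite gt_eqF.
rewrite mul0r => le0'; apply/eqP; rewrite -sqrf_eq0 eq_le sqr_ge0 andbT.
have : 0 < `|B| + 1 + B by rewrite -addrAC ltr_wpDl // -lerBlDr sub0r -normrN ler_norm.
by move=> pos; rewrite -(pmulr_lle0 _ pos).
Qed.

Section Rayleigh.
Variables (R : realType) (m k : nat) (A : 'M[R]_(m, k)).
Local Open Scope classical_set_scope.

Lemma compact_unit_sphere : compact [set y : 'rV[R]_m | sqnorm y = 1].
Proof.
apply: (@subclosed_compact _ _
  [set y : 'rV[R]_m | forall i, `[(-1 : R), 1]%classic (y ord0 i)]).
- have -> : [set y : 'rV[R]_m | sqnorm y = 1] =
            (fun y => sqnorm (y *m 1%:M)) @^-1` [set x | x = 1].
    by apply: funext => y; rewrite /= mulmx1.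
  apply: (proj1 (continuous_closedP _)); last exact: closed_eq.
  exact: continuous_sqnorm_mulmx.
- apply: (@rV_compact _ _ (fun _ => `[(-1 : R), 1]%classic)) => i.
  exact: segment_compact.
- move=> y /= y1 i; rewrite in_itv /= -ler_norml.
  rewrite -(@ler_pXn2r _ 2) ?nnegrE ?normr_ge0 // expr1n real_normK ?num_real //.
  by rewrite -y1 sqr_coord_le_sqnorm.
Qed.

Lemma exists_rayleigh_max : (exists y : 'rV[R]_m, sqnorm y = 1) ->
  exists2 c : 'rV[R]_m, sqnorm c = 1 &
    forall y, sqnorm y = 1 -> sqnorm (y *m A) <= sqnorm (c *m A).
Proof.
move=> sphere_n0.
have [c] := compact_EVT_max sphere_n0 compact_unit_sphere
  (continuous_subspaceT (@continuous_sqnorm_mulmx R m k A)).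
by rewrite inE => c1 cmax; exists c => // y y1; apply: cmax; rewrite inE.
Qed.

Section Maximizer.
Variable c : 'rV[R]_m.
Hypotheses (c1 : sqnorm c = 1)
  (cmax : forall y, sqnorm y = 1 -> sqnorm (y *m A) <= sqnorm (c *m A)).
Let mu := sqnorm (c *m A).

Lemma rayleigh_le y : sqnorm (y *m A) <= mu * sqnorm y.
Proof.
have [->|y_n0] := eqVneq y 0; first by rewrite mul0mx !sqnorm0 mulr0.
have y_gt0 : 0 < sqnorm y by rewrite sqnorm_gt0.
have := cmax (sqnorm_normalize y_n0).
rewrite -scalemxAl sqnormZ exprVn sqr_sqrtr ?sqnorm_ge0 //.
by rewrite ler_pdivrMl // mulrC.
Qed.

(* First-order optimality: perturbing [c] along [w] can only decrease the
   quotient, which forces the residual [w] to vanish. *)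
Lemma rayleigh_max_eigen : c *m (A *m A^T) = mu *: c.
Proof.
set w := c *m (A *m A^T) - mu *: c.
suff /eqP : 2 * sqnorm w = 0 by rewrite mulf_eq0 pnatr_eq0 sqnorm_eq0 subr_eq0 => /eqP.
apply: (@linear_quadratic_le0 _ _ (sqnorm (w *m A) - mu * sqnorm w)) => t.
have := rayleigh_le (c + t *: w).
rewrite mulmxDl -scalemxAl !sqnormDZ c1 dotv_mulmx.
have -> : dotv (c *m (A *m A^T)) w = sqnorm w + mu * dotv c w.
  by rewrite /sqnorm /w dotvBl dotvZl; ring.
rewrite -/mu => le; lra.
Qed.

Lemma eigenvalue_gram_le a : eigenvalue (A^T *m A) a -> a <= mu.
Proof.
case/eigenvalueP => v va v_n0; have v_gt0 : 0 < sqnorm v by rewrite sqnorm_gt0.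
have := rayleigh_le (v *m A^T).
rewrite -mulmxA va sqnormZ /sqnorm dotv_mulmx trmxK va dotvZl -/(sqnorm v) => le.
have mu_ge0 : 0 <= mu := sqnorm_ge0 _.
have : a * (a - mu) <= 0 by rewrite -(pmulr_lle0 _ v_gt0); lra.
nra.
Qed.

Lemma lambda1_gram_rayleigh : c *m A != 0 -> lambda1 (A^T *m A) = mu.
Proof.
move=> cA_n0; have eig_mu : eigenvalue (A^T *m A) mu.
  apply/eigenvalueP; exists (c *m A) => //.
  by rewrite !mulmxA -(mulmxA c) rayleigh_max_eigen -scalemxAl.
have eig_ub : ubound [set a | eigenvalue (A^T *m A) a] mu by exact: eigenvalue_gram_le.
apply/eqP; rewrite eq_le; apply/andP; split; first by apply: ge_sup eig_ub; exists mu.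
by apply: sup_upper_bound => //; split; exists mu.
Qed.

End Maximizer.

Lemma sqnorm_mulmx_le_lambda1 y :
  y *m A != 0 -> sqnorm (y *m A) <= lambda1 (A^T *m A) * sqnorm y.
Proof.
move=> yA_n0; have y_n0 : y != 0 by apply: contraNneq yA_n0 => ->; rewrite mul0mx.
have [c c1 cmax] := exists_rayleigh_max (ex_intro _ _ (sqnorm_normalize y_n0)).
have cA_n0 : c *m A != 0.
  rewrite -sqnorm_gt0; apply: lt_le_trans (cmax _ (sqnorm_normalize y_n0)).
  rewrite -scalemxAl sqnormZ mulr_gt0 ?sqnorm_gt0 // exprn_gt0 //.
  by rewrite invr_gt0 sqrtr_gt0 sqnorm_gt0.
by rewrite (lambda1_gram_rayleigh c1 cmax cA_n0); exact: rayleigh_le.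
Qed.

Lemma eigenvalue_gram_ge0 a : eigenvalue (A^T *m A) a -> 0 <= a.
Proof.
case/eigenvalueP => v va v_n0.
have := sqnorm_ge0 (v *m A^T); rewrite /sqnorm dotv_mulmx trmxK va dotvZl.
by rewrite pmulr_lge0 // sqnorm_gt0.
Qed.

Lemma lambda1_gram_ge0 : 0 <= lambda1 (A^T *m A).
Proof.
rewrite /lambda1.
have [hs | /sup_out -> //] := pselect (has_sup [set a | eigenvalue (A^T *m A) a]).
have [[a eig_a] _] := hs.
exact: le_trans (eigenvalue_gram_ge0 eig_a) (sup_upper_bound hs eig_a).
Qed.

End Rayleigh.

Lemma sqr_mean_abs_le (R : realFieldType) (J : finType) (P X : J -> R) :
  (forall j, 0 <= P j) -> \sum_j P j = 1 ->
  (\sum_j P j * `|X j|) ^+ 2 <= \sum_j P j * X j ^+ 2.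
Proof.
move=> P_ge0 P1; set mean := \sum_j P j * `|X j|.
have : 0 <= \sum_j P j * (`|X j| - mean) ^+ 2.
  by apply: sumr_ge0 => j _; rewrite mulr_ge0 ?sqr_ge0.
have -> : \sum_j P j * (`|X j| - mean) ^+ 2 =
          \sum_j (P j * X j ^+ 2 - 2 * mean * (P j * `|X j|) + mean ^+ 2 * P j).
  by apply: eq_bigr => j _; rewrite -[X j ^+ 2]real_normK ?num_real; ring.
rewrite big_split sumrB /= -!mulr_sumr P1 -/mean; lra.
Qed.

Section RademacherVariables.
Variables (R : realType) (I : finType) (p : R).
Hypotheses (p_ge0 : 0 <= p) (p_le : p <= 1 / 2).

Definition gamma_prob (g : {ffun I -> 'I_3}) : R := \prod_k gprob p (g k).

Lemma sum_gprob_gval (F : R -> R) :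
  \sum_t gprob p t * F (gval R t) = p * F 1 + p * F (-1) + (1 - 2 * p) * F 0.
Proof. by rewrite !big_ord_recl big_ord0 addr0 addrA /gprob /gval. Qed.

Lemma sum_gprob1 : \sum_t gprob p t = 1.
Proof.
have := sum_gprob_gval (fun => 1); under eq_bigr do rewrite mulr1.
by move=> ->; ring.
Qed.

Lemma gprob_ge0 t : 0 <= gprob p t.
Proof. by rewrite /gprob; case: ifP => _; [exact: p_ge0 | move: p_le; lra]. Qed.

Lemma gamma_prob_ge0 g : 0 <= gamma_prob g.
Proof. by apply: prodr_ge0 => k _; exact: gprob_ge0. Qed.

Lemma sum_gamma_prob : \sum_g gamma_prob g = 1.
Proof.
rewrite /gamma_prob -(bigA_distr_bigA (fun _ => gprob p)) big1 // => k _.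
exact: sum_gprob1.
Qed.

Lemma sum_gamma_prob_gval k k' :
  \sum_g gamma_prob g * (gval R (g k) * gval R (g k')) = (k == k')%:R * (2 * p).
Proof.
pose F i t := gprob p t *
  ((if i == k then gval R t else 1) * (if i == k' then gval R t else 1)).
transitivity (\sum_(g : {ffun I -> 'I_3}) \prod_i F i (g i)).
  apply: eq_bigr => g _; rewrite /F /gamma_prob !big_split /=.
  by rewrite -!big_mkcond !big_pred1_eq.
rewrite -(bigA_distr_bigA F) (bigD1 k) //= /F eqxx.
have [<-|_] := eqVneq k k'; last first.
  by under eq_bigr do rewrite mulr1; rewrite (sum_gprob_gval id) /=; ring.
rewrite [X in _ * X]big1 => [|i /negbTE ik]; last first.
  by rewrite ik; under eq_bigr do rewrite !mulr1; exact: sum_gprob1.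
by rewrite (sum_gprob_gval (fun x => x * x)) /=; ring.
Qed.

Lemma sum_gamma_prob_sqr (x : I -> R) :
  \sum_g gamma_prob g * (\sum_k gval R (g k) * x k) ^+ 2 = 2 * p * \sum_k x k ^+ 2.
Proof.
transitivity (\sum_g \sum_k \sum_k' x k * x k' *
                (gamma_prob g * (gval R (g k) * gval R (g k')))).
  apply: eq_bigr => g _; rewrite expr2 mulr_suml mulr_sumr; apply: eq_bigr => k _.
  by rewrite !mulr_sumr; apply: eq_bigr => k' _; ring.
rewrite exchange_big /=; under eq_bigr do rewrite exchange_big /=.
under eq_bigr do under eq_bigr do rewrite -mulr_sumr sum_gamma_prob_gval.
rewrite mulr_sumr; apply: eq_bigr => k _.
rewrite (bigD1 k) //= eqxx big1 => [|k' k'k]; first by rewrite addr0 /=; ring.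
by rewrite eq_sym (negbTE k'k) mul0r mulr0.
Qed.

Lemma sum_gamma_prob_abs_le (x : I -> R) (B : R) : 0 <= B ->
  \sum_k x k ^+ 2 <= B ^+ 2 ->
  \sum_g gamma_prob g * `|\sum_k gval R (g k) * x k| <= Num.sqrt (2 * p) * B.
Proof.
move=> B_ge0 x_le.
rewrite -(@ler_pXn2r _ 2) ?nnegrE ?mulr_ge0 ?sqrtr_ge0 ?sumr_ge0 // => [|g _]; last first.
  by rewrite mulr_ge0 ?gamma_prob_ge0.
apply: le_trans (sqr_mean_abs_le (fun g : {ffun I -> 'I_3} => \sum_k gval R (g k) * x k)
  gamma_prob_ge0 sum_gamma_prob) _.
rewrite sum_gamma_prob_sqr exprMn sqr_sqrtr ?ler_wpM2l //; move: p_ge0; lra.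
Qed.

End RademacherVariables.

Section BoxHull.
Local Open Scope classical_set_scope.
Variables (R : realType) (I : finType) (m : nat) (ut : I -> 'cV[R]_m).

Definition box_hull (C : R) : set 'cV[R]_m :=
  [set w | exists beta : I -> R, (forall k, `|beta k| <= C) /\ w = \sum_k beta k *: ut k].

Definition gram (l k : I) : R := ((ut l)^T *m ut k) 0 0.

Lemma gram_combination (beta : I -> R) k :
  ((\sum_l beta l *: ut l)^T *m ut k) 0 0 = \sum_l beta l * gram l k.
Proof.
rewrite linear_sum mulmx_suml summxE; apply: eq_bigr => l _.
by rewrite linearZ /= -scalemxAl mxE.
Qed.

Lemma sup_box_hull_le (C : R) (x : I -> R) : 0 <= C ->
  sup [set \sum_k x k * (h^T *m ut k) 0 0 | h in box_hull C]
    <= C * \sum_l `|\sum_k x k * gram l k|.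
Proof.
move=> C_ge0; apply: ge_sup.
  exists (\sum_k x k * ((0 : 'cV[R]_m)^T *m ut k) 0 0), 0 => //.
  exists (fun _ => 0); split => [k|]; first by rewrite normr0.
  by rewrite big1 // => k _; rewrite scale0r.
move=> _ [_ [beta [beta_le ->]] <-].
under eq_bigr do rewrite gram_combination mulr_sumr.
rewrite exchange_big /= mulr_sumr; apply: ler_sum => l _.
rewrite (eq_bigr (fun k => beta l * (x k * gram l k))) => [|k _]; last by ring.
by rewrite -mulr_sumr (le_trans (ler_norm _)) // normrM ler_wpM2r.
Qed.

Lemma trans_rademacher_box_hull_le (C B p : R) :
  0 <= C -> 0 <= B -> 0 <= p -> p <= 1 / 2 ->
  (forall l, \sum_k gram l k ^+ 2 <= B ^+ 2) ->
  trans_rademacher (box_hull C) ut p <= C * B * Num.sqrt (2 * p).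
Proof.
move=> C_ge0 B_ge0 p_ge0 p_le gram_le.
pose X (g : {ffun I -> 'I_3}) l := \sum_k gval R (g k) * gram l k.
have bound_ge0 : 0 <= C * B * Num.sqrt (2 * p) by rewrite !mulr_ge0 ?sqrtr_ge0.
have sum_le : \sum_g gamma_prob p g *
    sup [set \sum_k gval R (g k) * (h^T *m ut k) 0 0 | h in box_hull C]
  <= #|I|%:R * (C * B * Num.sqrt (2 * p)).
  apply: (@le_trans _ _ (C * \sum_l \sum_g gamma_prob p g * `|X g l|)).
    rewrite exchange_big mulr_sumr; apply: ler_sum => g _.
    rewrite -mulr_sumr mulrCA ler_wpM2l ?gamma_prob_ge0 //.
    exact: sup_box_hull_le.
  apply: (@le_trans _ _ (C * \sum_(l : I) Num.sqrt (2 * p) * B)).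
    by rewrite ler_wpM2l //; apply: ler_sum => l _; exact: sum_gamma_prob_abs_le.
  by rewrite sumr_const -mulr_natl; lra.
rewrite /trans_rademacher; have [->|N_n0] := eqVneq #|I| 0%N.
  by rewrite invr0 mul0r.
by rewrite ler_pdivrMl ?ltr0n ?lt0n.
Qed.

End BoxHull.

Lemma ler_sum_inj (R : numDomainType) (I J : finType) (h : J -> I) (F : I -> R) :
  injective h -> (forall i, 0 <= F i) -> \sum_j F (h j) <= \sum_i F i.
Proof.
move=> h_inj F_ge0.
rewrite -(big_imset (A := [pred j | true]) _ (in2W h_inj)) /=.
rewrite [leRHS](bigID (mem (h @: [pred j | true]))) /=.
by rewrite lerDl sumr_ge0.
Qed.

Section Kronecker.
Variable R : realType.

Lemma kron_mxvec_index d d' (u : 'cV[R]_d) (v : 'cV[R]_d') a b :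
  kron u v (mxvec_index a b) 0 = u a 0 * v b 0.
Proof. by rewrite /kron mxE mxvecE mxE big_ord1 mxE. Qed.

Lemma kron_dot d d' (u u' : 'cV[R]_d) (v v' : 'cV[R]_d') :
  ((kron u v)^T *m kron u' v') 0 0 = ((u^T *m u') 0 0) * ((v^T *m v') 0 0).
Proof.
rewrite mxE (reindex (uncurry (@mxvec_index d d'))) /=; last exact: curry_mxvec_bij.
rewrite [(u^T *m u') 0 0]mxE [(v^T *m v') 0 0]mxE big_distrlr pair_big /=.
by apply: eq_bigr => -[a b] _ /=; rewrite mxE !kron_mxvec_index !mxE; ring.
Qed.

Lemma col_dot_col d n (U : 'M[R]_(d, n)) a b :
  ((col a U)^T *m col b U) 0 0 = (U^T *m U) a b.
Proof. by rewrite !mxE; apply: eq_bigr => i _; rewrite !mxE. Qed.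

Lemma sum_sqr_gram_row_le d n (U : 'M[R]_(d, n)) :
  (forall i, ((col i U)^T *m col i U) 0 0 = 1) ->
  forall a, \sum_b (U^T *m U) a b ^+ 2 <= lambda1 (U^T *m U).
Proof.
move=> unit a; have rowE : (col a U)^T *m U = row a (U^T *m U) by rewrite row_mul tr_col.
have row_n0 : (col a U)^T *m U != 0.
  apply/negP => /eqP/rowP/(_ a); rewrite rowE mxE [in RHS]mxE -col_dot_col unit.
  by move/eqP; rewrite oner_eq0.
have := sqnorm_mulmx_le_lambda1 row_n0.
rewrite {2}/sqnorm /dotv trmxK unit mulr1 rowE sqnormE.
by under eq_bigr do rewrite mxE.
Qed.

Lemma gram_Ut d n (U : 'M[R]_(d, n)) (l k : pairs n) :
  gram (Ut U) l k = (U^T *m U) (val l).1 (val k).1 * (U^T *m U) (val l).2 (val k).2.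
Proof. by rewrite /gram kron_dot !col_dot_col. Qed.

Lemma sum_sqr_gram_Ut_le d n (U : 'M[R]_(d, n)) (mu : R) :
  (forall a, \sum_b (U^T *m U) a b ^+ 2 <= mu) ->
  forall l, \sum_k gram (Ut U) l k ^+ 2 <= mu ^+ 2.
Proof.
move=> row_le l; set K := U^T *m U; set i := (val l).1; set j := (val l).2.
under eq_bigr do rewrite gram_Ut -/K.
pose F (x : 'I_n * 'I_n) := (K i x.1 * K j x.2) ^+ 2.
apply: (le_trans (ler_sum_inj (F := F) val_inj (fun => sqr_ge0 _))).
have -> : \sum_x F x = (\sum_x K i x ^+ 2) * (\sum_y K j y ^+ 2).
  by rewrite big_distrlr pair_big; apply: eq_bigr => -[x y] _; rewrite /F exprMn.
by rewrite expr2 ler_pM ?row_le // sumr_ge0 // => x _; exact: sqr_ge0.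
Qed.

End Kronecker.

Theorem lemma1 (R : realType) (n d : nat) (e : rel 'I_n)
  (U : 'M[R]_(d, n)) (C p : R) :
  simple_graph e -> Lab e U -> 0 < C -> 0 < p -> p <= 1 / 2 ->
  trans_rademacher (H_Ut U C) (Ut U) p
    <= C * lambda1 (U^T *m U) * Num.sqrt (2 * p).
Proof.
move=> _ [unit _] C_gt0 p_gt0 p_le.
have -> : H_Ut U C = box_hull (Ut U) C by [].
apply: trans_rademacher_box_hull_le (ltW C_gt0) _ (ltW p_gt0) p_le _.
  exact: lambda1_gram_ge0.
exact: sum_sqr_gram_Ut_le (sum_sqr_gram_row_le unit).
Qed.
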